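(* Let $X,Y$ be finite sets, let $A$ be an arbitrary $|X|\times|Y|$ matrix (possibly with complex entries) with rows indexed by $X$ and columns by $Y$, and let $\mathcal{R}$ be a rectangle partition of $X\times Y$. Then $$\|A\|_2^2\le\sum_{R\in\mathcal{R}}\|A_R\|_2^2.$$
   Context: A rectangle is a subset of $X\times Y$ of the form $X_0\times Y_0$ with $X_0\subseteq X$, $Y_0\subseteq Y$; a rectangle partition is a set of pairwise disjoint rectangles whose union is $X\times Y$. For a rectangle $R=X_0\times Y_0$, $A_R$ is the $|X_0|\times|Y_0|$ submatrix of $A$ with rows in $X_0$ and columns in $Y_0$. $\|\cdot\|_2$ denotes the spectral norm (largest singular value). *)

From mathcomp Require Import all_boot all_order all_algebra.
From mathcomp Require Import classical_sets reals complex.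
Set Implicit Arguments. Unset Strict Implicit. Unset Printing Implicit Defensive.
Import Order.TTheory GRing.Theory Num.Theory.
Local Open Scope ring_scope.

Definition vnorm2 (R : realType) (n : nat) (v : 'cV[R[i]]_n) : R :=
  \sum_(k < n) ((complex.Re (v k 0)) ^+ 2 + (complex.Im (v k 0)) ^+ 2).

(* Spectral norm ||M||_2 = operator norm induced by the Euclidean norm,
   sup_{||v||=1} ||M v||.  (sup of the empty set is 0, for n = 0.) *)
Definition specnorm (R : realType) (m n : nat) (M : 'M[R[i]]_(m, n)) : R :=
  sup [set Num.sqrt (vnorm2 (M *m v)) | v in [set v : 'cV[R[i]]_n | vnorm2 v = 1]]%classic.

Definition submx_of (R : realType) (X Y : finType) (A : X -> Y -> R[i])
    (X0 : {set X}) (Y0 : {set Y}) : 'M[R[i]]_(#|X0|, #|Y0|) :=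
  \matrix_(p < #|X0|, q < #|Y0|) A (enum_val p) (enum_val q).

Definition fullmx (R : realType) (X Y : finType) (A : X -> Y -> R[i]) :=
  submx_of A [set: X] [set: Y].

Definition rect (X Y : finType) (r : {set X} * {set Y}) : {set X * Y} :=
  finset.setX r.1 r.2.

Definition rect_partition (X Y : finType) (P : {set {set X} * {set Y}}) : Prop :=
  (forall r s, r \in P -> s \in P -> r != s -> [disjoint rect r & rect s]) /\
  \bigcup_(r in P) rect r = [set: X * Y].

(* Fix a unit vector f, put g = A f and, for each rectangle r = X0 x Y0 of the
   partition, h_r = A_r (f restricted to Y0).  Identify C with R^2, with real
   inner product <.,.>.  Because the rectangles partition X x Y,
   |g|^2 = sum_r <g|X0, h_r>, while |h_r|^2 <= ||A_r||^2 |f|Y0|^2.  Completing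
   the square gives 2 <g|X0, h_r> <= |f|Y0|^2 |g|X0|^2 + ||A_r||^2, and, using
   the partition once more, sum_r |f|Y0|^2 |g|X0|^2 = |f|^2 |g|^2 = |g|^2.
   Summing over r yields |g|^2 <= sum_r ||A_r||^2. *)

From mathcomp Require Import all_boot all_order all_algebra.
From mathcomp Require Import classical_sets reals complex boolp.
From mathcomp Require Import ring lra.
Import Order.TTheory GRing.Theory Num.Theory.
Local Open Scope ring_scope.
Set Implicit Arguments. Unset Strict Implicit. Unset Printing Implicit Defensive.

Section ComplexAsPlane.
Variable R : realType.
Implicit Types a b z : R[i].

Definition sqnormc z : R := complex.Re z ^+ 2 + complex.Im z ^+ 2.

Definition dotc a b : R :=
  complex.Re a * complex.Re b + complex.Im a * complex.Im b.

Lemma ReM a b :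
  complex.Re (a * b) = complex.Re a * complex.Re b - complex.Im a * complex.Im b.
Proof. by case: a b => [a1 a2] [b1 b2]. Qed.

Lemma ImM a b :
  complex.Im (a * b) = complex.Re a * complex.Im b + complex.Im a * complex.Re b.
Proof. by case: a b => [a1 a2] [b1 b2]. Qed.

Lemma Re_sum (I : Type) (r : seq I) (P : pred I) (F : I -> R[i]) :
  complex.Re (\sum_(i <- r | P i) F i) = \sum_(i <- r | P i) complex.Re (F i).
Proof. by apply: (big_morph (@complex.Re R)) => // -[x1 x2] [y1 y2]. Qed.

Lemma Im_sum (I : Type) (r : seq I) (P : pred I) (F : I -> R[i]) :
  complex.Im (\sum_(i <- r | P i) F i) = \sum_(i <- r | P i) complex.Im (F i).
Proof. by apply: (big_morph (@complex.Im R)) => // -[x1 x2] [y1 y2]. Qed.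

Lemma sqnormc_ge0 z : 0 <= sqnormc z.
Proof. by rewrite addr_ge0 // sqr_ge0. Qed.

Lemma sqnormc_eq0 z : sqnormc z = 0 -> z = 0.
Proof.
case: z => a b; rewrite /sqnormc /= => /eqP.
by rewrite paddr_eq0 ?sqr_ge0 // !sqrf_eq0 => /andP[/eqP-> /eqP->].
Qed.

Lemma sqnormcM a b : sqnormc (a * b) = sqnormc a * sqnormc b.
Proof. by rewrite /sqnormc ReM ImM; ring. Qed.

Lemma sqnormcE z : sqnormc z = dotc z z.
Proof. by rewrite /sqnormc /dotc !expr2. Qed.

Lemma dotc_sumr a (I : Type) (r : seq I) (P : pred I) (F : I -> R[i]) :
  dotc a (\sum_(i <- r | P i) F i) = \sum_(i <- r | P i) dotc a (F i).
Proof. by rewrite /dotc Re_sum Im_sum !mulr_sumr -big_split. Qed.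

Lemma sqnormcD_le a b : sqnormc (a + b) <= 2 * sqnormc a + 2 * sqnormc b.
Proof.
case: a b => [a1 a2] [b1 b2]; rewrite /sqnormc /=.
have := sqr_ge0 (a1 - b1); have := sqr_ge0 (a2 - b2); nra.
Qed.

Lemma sqnormc_sum_le (I : Type) (r : seq I) (F : I -> R[i]) :
  sqnormc (\sum_(i <- r) F i) <= 2 ^+ size r * \sum_(i <- r) sqnormc (F i).
Proof.
elim: r => [|x r IH]; first by rewrite !big_nil /sqnormc /= expr0n mulr0 add0r.
rewrite !big_cons exprS; apply: le_trans (sqnormcD_le _ _) _.
have p_ge1 : 1 <= 2 ^+ size r :> R by rewrite exprn_ege1 // ler1n.
have := sqnormc_ge0 (F x); nra.
Qed.

(* Completing the square: [0 <= sum |s u - w|^2 = s^2 |u|^2 - 2 s <u, w> + |w|^2]. *)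
Lemma dotc_sum_le (I : finType) (D : {pred I}) (u w : I -> R[i]) (s c : R) :
  0 <= s -> \sum_(i in D) sqnormc (w i) <= c ^+ 2 * s ->
  2 * \sum_(i in D) dotc (u i) (w i) <= s * \sum_(i in D) sqnormc (u i) + c ^+ 2.
Proof.
move=> s_ge0 w_le; have [s0|s_neq0] := eqVneq s 0.
  have w_eq0 : \sum_(i in D) sqnormc (w i) = 0.
    move: w_le; rewrite s0 mulr0 => w_le0; apply/eqP; rewrite eq_le w_le0.
    by rewrite sumr_ge0 // => i _; apply: sqnormc_ge0.
  rewrite s0.
  have w0 i : i \in D -> w i = 0.
    by move=> Di; apply/sqnormc_eq0/(psumr_eq0P _ w_eq0) => // j _; apply: sqnormc_ge0.
  rewrite mul0r add0r big1 ?mulr0 ?sqr_ge0 // => i /w0->.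
  by rewrite /dotc /= !mulr0 addr0.
have s_gt0 : 0 < s by rewrite lt0r s_neq0.
have square_ge0 : 0 <= s ^+ 2 * \sum_(i in D) sqnormc (u i)
    - 2 * s * \sum_(i in D) dotc (u i) (w i) + \sum_(i in D) sqnormc (w i).
  have -> : s ^+ 2 * \sum_(i in D) sqnormc (u i)
      - 2 * s * \sum_(i in D) dotc (u i) (w i) + \sum_(i in D) sqnormc (w i) =
      \sum_(i in D) ((s * complex.Re (u i) - complex.Re (w i)) ^+ 2 +
                     (s * complex.Im (u i) - complex.Im (w i)) ^+ 2).
    rewrite !mulr_sumr -sumrB -big_split /=.
    by apply: eq_bigr => i _; rewrite /sqnormc /dotc; ring.
  by rewrite sumr_ge0 // => i _; rewrite addr_ge0 // sqr_ge0.
rewrite -(ler_pM2l s_gt0); nra.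
Qed.

End ComplexAsPlane.

Section EuclideanNorm.
Variables (R : realType) (n : nat).
Implicit Types v : 'cV[R[i]]_n.

Lemma vnorm2E v : vnorm2 v = \sum_(k < n) sqnormc (v k 0).
Proof. by []. Qed.

Lemma vnorm2_ge0 v : 0 <= vnorm2 v.
Proof. by rewrite sumr_ge0 // => k _; apply: sqnormc_ge0. Qed.

Lemma vnorm2_eq0 v : (vnorm2 v == 0) = (v == 0).
Proof.
apply/eqP/eqP => [v0|->]; last first.
  by rewrite vnorm2E big1 // => k _; rewrite mxE /sqnormc /= expr0n addr0.
apply/matrixP => k j; rewrite ord1 mxE; apply: sqnormc_eq0.
by apply: (psumr_eq0P _ v0) => // i _; apply: sqnormc_ge0.
Qed.

Lemma vnorm20 : vnorm2 (0 : 'cV[R[i]]_n) = 0.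
Proof. by apply/eqP; rewrite vnorm2_eq0. Qed.

Lemma vnorm2_scale (c : R) v : vnorm2 (Complex c 0 *: v) = c ^+ 2 * vnorm2 v.
Proof.
rewrite !vnorm2E mulr_sumr; apply: eq_bigr => k _.
by rewrite mxE sqnormcM /sqnormc /= expr0n addr0.
Qed.

End EuclideanNorm.

Lemma sqrtr_le_sqr (R : rcfType) (x K : R) : 0 <= K -> (Num.sqrt x <= K) = (x <= K ^+ 2).
Proof.
move=> K_ge0; have [x_ge0|x_lt0] := leP 0 x.
  by rewrite -[K in LHS]ger0_norm // -sqrtr_sqr ler_sqrt // sqr_ge0.
by rewrite ler0_sqrtr ?(ltW x_lt0) // K_ge0 (le_trans (ltW x_lt0)) ?sqr_ge0.
Qed.

Section SpectralNorm.
Variables (R : realType) (m n : nat) (M : 'M[R[i]]_(m, n)).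

Let gains :=
  [set Num.sqrt (vnorm2 (M *m v)) | v in [set v : 'cV[R[i]]_n | vnorm2 v = 1]]%classic.

(* Each entry of a unit vector has modulus at most 1. *)
Lemma gains_bounded : has_ubound gains.
Proof.
exists (Num.sqrt (\sum_(i < m) 2 ^+ size (index_enum 'I_n) * \sum_(j < n) sqnormc (M i j))).
move=> _ [v /= v1 <-]; apply: ler_wsqrtr; rewrite vnorm2E; apply: ler_sum => i _.
rewrite mxE; apply: le_trans (sqnormc_sum_le _ _) _; rewrite ler_wpM2l ?exprn_ge0 //.
apply: ler_sum => j _; rewrite sqnormcM ler_piMr ?sqnormc_ge0 //.
by rewrite -v1 vnorm2E (bigD1 j) //= lerDl sumr_ge0 // => k _; apply: sqnormc_ge0.
Qed.

Lemma specnorm_ge0 : 0 <= specnorm M.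
Proof.
rewrite /specnorm -/gains.
have [[[_ [v v1 _]] _]|no_sup] := pselect (has_sup gains); last by rewrite sup_out.
have v_gain : gains (Num.sqrt (vnorm2 (M *m v))) by exists v.
exact: le_trans (sqrtr_ge0 _) (ub_le_sup gains_bounded v_gain).
Qed.

Lemma vnorm2_mulmx_unit_le v : vnorm2 v = 1 -> vnorm2 (M *m v) <= specnorm M ^+ 2.
Proof.
move=> v1; rewrite -sqrtr_le_sqr; last exact: specnorm_ge0.
have v_gain : gains (Num.sqrt (vnorm2 (M *m v))) by exists v.
by rewrite /specnorm -/gains; have := ub_le_sup gains_bounded v_gain.
Qed.

Lemma vnorm2_mulmx_le v : vnorm2 (M *m v) <= specnorm M ^+ 2 * vnorm2 v.
Proof.
have [->|v_neq0] := eqVneq v 0; first by rewrite mulmx0 !vnorm20 mulr0.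
have s_gt0 : 0 < vnorm2 v by rewrite lt0r vnorm2_eq0 v_neq0 vnorm2_ge0.
pose c := (Num.sqrt (vnorm2 v))^-1.
have c2 : c ^+ 2 = (vnorm2 v)^-1 by rewrite exprVn sqr_sqrtr // ltW.
have := vnorm2_mulmx_unit_le (v := Complex c 0 *: v).
rewrite -scalemxAr !vnorm2_scale c2 mulVf ?lt0r_neq0 // => /(_ erefl).
by rewrite -(ler_pM2l s_gt0) mulrA mulfV ?lt0r_neq0 // mul1r mulrC.
Qed.

Lemma specnorm_sqr_le (S : R) : 0 <= S ->
  (forall v, vnorm2 v = 1 -> vnorm2 (M *m v) <= S) -> specnorm M ^+ 2 <= S.
Proof.
move=> S_ge0 bound; rewrite -[S]sqr_sqrtr // ler_pXn2r ?nnegrE ?specnorm_ge0 ?sqrtr_ge0 //.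
rewrite /specnorm -/gains; have [gains_n0|gains_0] := pselect (gains !=set0)%classic.
  by apply: ge_sup => // _ [v /= v1 <-]; rewrite ler_sqrt // bound.
have -> : gains = set0%classic by apply/eqP/negPn/negP => /set0P/gains_0.
by rewrite sup0 sqrtr_ge0.
Qed.

End SpectralNorm.

Section RectanglePartition.
Variables (X Y : finType) (P : {set {set X} * {set Y}}).
Hypothesis partP : rect_partition P.
Variable V : nmodType.

Lemma sum_rect_partition (p : X * Y) (F : V) :
  \sum_(r in P) (if p \in rect r then F else 0) = F.
Proof.
case: partP => disjP coverP.
have /bigcupP[r0 r0P pr0] : p \in \bigcup_(r in P) rect r by rewrite coverP inE.
rewrite (bigD1 r0) //= pr0 big1 ?addr0 // => r /andP[rP r_neq0].
by rewrite (disjointFl (disjP _ _ rP r0P r_neq0) pr0).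
Qed.

Lemma sum_row_partition (x : X) (F : Y -> V) :
  \sum_y F y = \sum_(r in P | x \in r.1) \sum_(y in r.2) F y.
Proof.
under eq_bigr => y _ do rewrite -(sum_rect_partition (x, y) (F y)).
rewrite exchange_big big_mkcondr /=; apply: eq_bigr => r _.
have in_rect y : ((x, y) \in rect r) = (x \in r.1) && (y \in r.2).
  exact: finset.in_setX.
rewrite [in RHS]big_mkcond; case: ifP => xr.
  by apply: eq_bigr => y _; rewrite in_rect xr.
by rewrite big1 // => y _; rewrite in_rect xr.
Qed.

Lemma sum_partition (F : X -> Y -> V) :
  \sum_(r in P) \sum_(x in r.1) \sum_(y in r.2) F x y = \sum_x \sum_y F x y.
Proof.
rewrite (exchange_big_dep predT) //=; apply: eq_bigr => x _.
by rewrite [RHS](sum_row_partition x).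
Qed.

End RectanglePartition.

Section Restriction.
Variable R : realType.

Definition col_on (T : finType) (S : {set T}) (f : T -> R[i]) : 'cV[R[i]]_#|S| :=
  \col_(k < #|S|) f (enum_val k).

Lemma vnorm2_col_on (T : finType) (S : {set T}) (f : T -> R[i]) :
  vnorm2 (col_on S f) = \sum_(t in S) sqnormc (f t).
Proof. by rewrite vnorm2E [RHS]big_enum_val; apply: eq_bigr => k _; rewrite mxE. Qed.

Lemma mul_submx_col_on (X Y : finType) (A : X -> Y -> R[i]) (X0 : {set X})
    (Y0 : {set Y}) (f : Y -> R[i]) :
  submx_of A X0 Y0 *m col_on Y0 f = col_on X0 (fun x => \sum_(y in Y0) A x y * f y).
Proof.
apply/matrixP => k j; rewrite !mxE [RHS]big_enum_val.
by apply: eq_bigr => l _; rewrite !mxE.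
Qed.

End Restriction.

Section BlockBound.
Variables (R : realType) (X Y : finType) (A : X -> Y -> R[i]).
Variable P : {set {set X} * {set Y}}.
Hypothesis partP : rect_partition P.

Lemma sum_sqnormc_mul_le (f : Y -> R[i]) : \sum_y sqnormc (f y) = 1 ->
  \sum_x sqnormc (\sum_y A x y * f y) <=
  \sum_(r in P) specnorm (submx_of A r.1 r.2) ^+ 2.
Proof.
move=> f1; pose g x := \sum_y A x y * f y.
pose h (r : {set X} * {set Y}) x := \sum_(y in r.2) A x y * f y.
pose mass (r : {set X} * {set Y}) := \sum_(y in r.2) sqnormc (f y).
pose G (r : {set X} * {set Y}) := \sum_(x in r.1) sqnormc (g x).
pose N2 (r : {set X} * {set Y}) := specnorm (submx_of A r.1 r.2) ^+ 2.
have g_split : \sum_x sqnormc (g x) = \sum_(r in P) \sum_(x in r.1) dotc (g x) (h r x).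
  rewrite (exchange_big_dep predT) //=; apply: eq_bigr => x _.
  by rewrite sqnormcE {2}/g (sum_row_partition partP x) dotc_sumr.
have mass_G : \sum_(r in P) mass r * G r = \sum_x sqnormc (g x).
  transitivity (\sum_(r in P) \sum_(x in r.1) \sum_(y in r.2) sqnormc (g x) * sqnormc (f y)).
    apply: eq_bigr => r _; rewrite mulrC big_distrl; apply: eq_bigr => x _.
    exact: mulr_sumr.
  by rewrite sum_partition //; apply: eq_bigr => x _; rewrite -mulr_sumr f1 mulr1.
have block_le (r : {set X} * {set Y}) :
    2 * \sum_(x in r.1) dotc (g x) (h r x) <= mass r * G r + N2 r.
  apply: dotc_sum_le; first by rewrite sumr_ge0 // => y _; apply: sqnormc_ge0.
  have := vnorm2_mulmx_le (submx_of A r.1 r.2) (col_on r.2 f).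
  by rewrite mul_submx_col_on !vnorm2_col_on.
have : 2 * \sum_x sqnormc (g x) <= \sum_x sqnormc (g x) + \sum_(r in P) N2 r.
  rewrite {1}g_split mulr_sumr -{1}mass_G -big_split /=.
  by apply: ler_sum => r _; apply: block_le.
by rewrite /N2; lra.
Qed.

End BlockBound.

Lemma sum_setT (V : nmodType) (T : finType) (F : T -> V) :
  \sum_(t in [set: T]) F t = \sum_t F t.
Proof. by apply: eq_bigl => t; rewrite inE. Qed.

Unset Implicit Arguments.
Set Strict Implicit.

Theorem mainTheorem3 (R : realType) (X Y : finType) (A : X -> Y -> R[i])
    (P : {set {set X} * {set Y}}) :
  rect_partition P ->
  specnorm (fullmx A) ^+ 2 <= \sum_(r in P) specnorm (submx_of A r.1 r.2) ^+ 2.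
Proof.
move=> partP; apply: specnorm_sqr_le => [|v v1].
  by rewrite sumr_ge0 // => r _; rewrite sqr_ge0.
pose f y := v (enum_rank_in (finset.in_setT y) y) 0.
have v_col : v = col_on [set: Y] f.
  by apply/matrixP => k j; rewrite ord1 !mxE /f enum_valK_in.
rewrite v_col vnorm2_col_on sum_setT in v1.
rewrite v_col mul_submx_col_on vnorm2_col_on sum_setT.
under eq_bigr do rewrite sum_setT.
exact: sum_sqnormc_mul_le.
Qed.
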